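(* Let $G$ be a trigraph containing a fence gadget $F$ attached to a set $S$ and satisfying the attachment rule in $G$. In any partial $4$-sequence from $G$, the first contraction involving a pair consisting of a vertex of $V(F)$ and a vertex of $V(F)\cup S$ can only occur after $S$ has been contracted into a single vertex (i.e., at the moment of that contraction, $S$ is contained in a single part).
   Context: A trigraph $G$ consists of a vertex set $V(G)$ and two disjoint sets of unordered pairs of distinct vertices: black edges and red edges; the red graph is formed by the red edges. Contracting two distinct vertices $u,v$ replaces them by a new vertex $w$ such that, for every other vertex $z$, $wz$ is black if $uz,vz$ are both black, a non-edge if both are non-edges, and red otherwise. A partial $d$-sequence from $G$ is a sequence of trigraphs starting at $G$, each obtained from the previous by one contraction, all of maximum red degree at most $d$. Each vertex $u$ of a later trigraph corresponds to the set $u(G)$ (its part) of vertices of $G$ merged into it; a contraction of $u,u'$ involves a pair $v,v'$ of vertices of $G$ if $v\in u(G),v'\in u'(G)$ or vice versa. A fence gadget is a trigraph $F$ on $A\cup B$, $A=\{a_1,\dots,a_6\}$, $B=\{b_1,\dots,b_6\}$, whose black edges are those of the cycles $a_1a_2a_3a_4a_5a_6a_1$ and $b_1b_2b_3b_4b_5b_6b_1$ together with $b_1a_6$, and whose red edges are $a_ib_i$ for $i\in[6]$ and $a_ib_{i+1}$ for $i\in[5]$. Inside a trigraph $G$, $F$ is attached to a nonempty set $S\subseteq V(G)\setminus V(F)$ if every vertex of $A$ is joined by a black edge to every vertex of $S$ and no vertex of $B$ is adjacent to a vertex of $S$. $F$ satisfies the attachment rule in $G$ if $V(F)$ is the vertex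 set of a connected component of the red graph of $G$ and there is a set $X\subseteq V(G)\setminus(V(F)\cup S)$ such that every vertex of $A$ has exactly $X\cup S$ as its set of neighbours outside $V(F)$, every vertex of $B$ has exactly $X$ as its set of neighbours outside $V(F)$ (all these edges black), and every vertex of $X$ is adjacent to every vertex of $S$. *)

From mathcomp Require Import all_boot.
Set Implicit Arguments. Unset Strict Implicit. Unset Printing Implicit Defensive.

(* The initial trigraph G: vertex set = the whole finite type V,
   black and red edge relations. *)
Record trigraph (V : finType) := Trigraph { black : rel V; red : rel V }.

Definition wf_trigraph (V : finType) (G : trigraph V) : Prop :=
  [/\ symmetric (black G), symmetric (red G),
      irreflexive (black G), irreflexive (red G) &
      forall x y, ~~ (black G x y && red G x y)].

(* Trigraphs arising along a contraction sequence from G: every vertex is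
   labelled by its part u(G), a subset of V. *)
Record ptrigraph (V : finType) :=
  PTrigraph { pv : {set {set V}}; pb : rel {set V}; pr : rel {set V} }.

Definition lift (V : finType) (G : trigraph V) : ptrigraph V :=
  PTrigraph [set [set x] | x : V]
    (fun X Y => [exists x, exists y, [&& X == [set x], Y == [set y] & black G x y]])
    (fun X Y => [exists x, exists y, [&& X == [set x], Y == [set y] & red G x y]]).

Definition contract (V : finType) (H : ptrigraph V) (u v : {set V}) : ptrigraph V :=
  let w := u :|: v in
  let nonedge x y := ~~ pb H x y && ~~ pr H x y in
  PTrigraph (w |: (pv H :\ u :\ v))
    (fun x y => if x == w then (y != w) && pb H u y && pb H v y
                else if y == w then pb H x u && pb H x v
                else pb H x y)
    (fun x y => if x == w then
                  [&& y != w, ~~ (pb H u y && pb H v y) & ~~ (nonedge u y && nonedge v y)]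
                else if y == w then
                  ~~ (pb H x u && pb H x v) && ~~ (nonedge x u && nonedge x v)
                else pr H x y).

Definition reddeg (V : finType) (H : ptrigraph V) (x : {set V}) : nat :=
  #|[set y in pv H | pr H x y]|.

Definition maxred_le (V : finType) (H : ptrigraph V) (d : nat) : Prop :=
  forall x, x \in pv H -> reddeg H x <= d.

Definition stage (V : finType) (G : trigraph V) (cs : seq ({set V} * {set V})) (i : nat)
  : ptrigraph V :=
  foldl (fun H c => contract H c.1 c.2) (lift G) (take i cs).

Definition contr (V : finType) (cs : seq ({set V} * {set V})) (i : nat) :=
  nth (set0, set0) cs i.

Definition partial_seq (V : finType) (G : trigraph V) (d : nat)
  (cs : seq ({set V} * {set V})) : Prop :=
  (forall i, i < size cs ->
     [/\ (contr cs i).1 \in pv (stage G cs i), (contr cs i).2 \in pv (stage G cs i)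
       & (contr cs i).1 != (contr cs i).2]) /\
  (forall i, i <= size cs -> maxred_le (stage G cs i) d).

Definition involves (V : finType) (c : {set V} * {set V}) (x y : V) : bool :=
  ((x \in c.1) && (y \in c.2)) || ((x \in c.2) && (y \in c.1)).

(* Fence gadget, with 0-based indices: a i = a_{i+1}, b i = b_{i+1}. *)
Definition VF (V : finType) (a b : 'I_6 -> V) : {set V} :=
  [set a i | i : 'I_6] :|: [set b i | i : 'I_6].

Definition is_fence (V : finType) (G : trigraph V) (a b : 'I_6 -> V) : Prop :=
  [/\ injective a, injective b & (forall i j, a i != b j)] /\
  [/\ (forall i j : 'I_6, black G (a i) (a j) = ((i.+1 %% 6 == j) || (j.+1 %% 6 == i))),
      (forall i j : 'I_6, black G (b i) (b j) = ((i.+1 %% 6 == j) || (j.+1 %% 6 == i))) &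
      (forall i j : 'I_6, black G (a i) (b j) = ((i == 5 :> nat) && (j == 0 :> nat)))] /\
  [/\
      (forall i j : 'I_6, red G (a i) (a j) = false),
      (forall i j : 'I_6, red G (b i) (b j) = false) &
      (forall i j : 'I_6, red G (a i) (b j) = ((i == j :> nat) || (j == i.+1 :> nat)))].

Definition adj (V : finType) (G : trigraph V) (x y : V) : bool := black G x y || red G x y.

Definition attached (V : finType) (G : trigraph V) (a b : 'I_6 -> V) (S : {set V}) : Prop :=
  [/\ S != set0, [disjoint S & VF a b],
      (forall i s, s \in S -> black G (a i) s) &
      (forall i s, s \in S -> ~~ adj G (b i) s)].

Definition attachment_rule (V : finType) (G : trigraph V) (a b : 'I_6 -> V) (S : {set V})
  : Prop :=
  (forall x, x \in VF a b -> [set y | connect (red G) x y] = VF a b) /\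
  exists X : {set V},
    [/\ [disjoint X & VF a b :|: S],
        (forall i z, z \notin VF a b -> adj G (a i) z = (z \in X :|: S)) &
        (forall i z, z \in X :|: S -> black G (a i) z)] /\
  [/\
        (forall i z, z \notin VF a b -> adj G (b i) z = (z \in X)),
        (forall i z, z \in X -> black G (b i) z) &
        (forall x s, x \in X -> s \in S -> adj G x s)].

From Pilot Require Import Defs.
From mathcomp Require Import all_boot.
Set Implicit Arguments. Unset Strict Implicit. Unset Printing Implicit Defensive.

(* Along a contraction sequence every trigraph is the quotient of G by a partition of V
   into parts, and until the first contraction involving V(F) and V(F) u S no part
   contains a vertex of V(F) together with another vertex of V(F) u S.  When that
   contraction merges the parts of x in V(F) and y in V(F) u S, the part of every vertex
   z that sees {x, y} neither all black nor all non-adjacent becomes a red neighbour of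
   the new vertex.  A check over the twelve fence vertices finds five such z, except
   when x and y lie on opposite sides of the fence, where there are three; in that case
   every vertex of S is such a z, so if S met two parts the red degree would again
   reach 5. *)

Section Between.
Variables (V : finType) (e : rel V).
Implicit Types P Q : {set V}.

Definition rel_between (P Q : {set V}) : bool := [forall p in P, forall q in Q, e p q].

Lemma rel_betweenP P Q :
  reflect (forall p q, p \in P -> q \in Q -> e p q) (rel_between P Q).
Proof.
apply: (iffP forall_inP) => [H p q hp hq | H p hp].
  by move/forall_inP: (H p hp); apply.
by apply/forall_inP => q; apply: H.
Qed.

Lemma rel_betweenUl P1 P2 Q :
  rel_between (P1 :|: P2) Q = rel_between P1 Q && rel_between P2 Q.
Proof.
apply/rel_betweenP/andP => [H | [/rel_betweenP H1 /rel_betweenP H2] p q].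
  by split; apply/rel_betweenP => p q hp; apply: H; rewrite inE hp ?orbT.
by case/setUP; [apply: H1 | apply: H2].
Qed.

Lemma rel_betweenUr P Q1 Q2 :
  rel_between P (Q1 :|: Q2) = rel_between P Q1 && rel_between P Q2.
Proof.
apply/rel_betweenP/andP => [H | [/rel_betweenP H1 /rel_betweenP H2] p q hp].
  by split; apply/rel_betweenP => p q hp hq; apply: H; rewrite // inE hq ?orbT.
by case/setUP; [apply: H1 | apply: H2].
Qed.

Lemma rel_between1 x y : rel_between [set x] [set y] = e x y.
Proof.
apply/rel_betweenP/idP => [H | exy p q]; first exact: H (set11 x) (set11 y).
by rewrite !inE => /eqP -> /eqP ->.
Qed.

End Between.

Definition nonadj (V : finType) (G : trigraph V) : rel V := fun x y => ~~ adj G x y.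

Lemma partition_merge (T : finType) (D : {set T}) (Ps : {set {set T}}) (u v : {set T}) :
  partition Ps D -> u \in Ps -> v \in Ps -> u != v ->
  partition ((u :|: v) |: (Ps :\ u :\ v)) D.
Proof.
move=> partPs hu hv neq_uv.
have hv' : v \in Ps :\ u by rewrite !inE eq_sym neq_uv.
have partD := partitionD1 (partitionD1 partPs hu) hv'.
have -> : D = (u :|: v) :|: (D :\: u :\: v).
  apply/setP => x; rewrite !inE.
  case xu: (x \in u); first by rewrite (subsetP (partitionS partPs hu)).
  by case xv: (x \in v); first by rewrite (subsetP (partitionS partPs hv)).
apply: partitionU1 partD _ _; first by rewrite setU_eq0 negb_and (partition_neq0 partPs hu).
rewrite -setI_eq0; apply/eqP/setP => x; rewrite !inE.
by case: (x \in u); case: (x \in v); rewrite ?andbF.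
Qed.

Definition quotient_of (V : finType) (G : trigraph V) (H : ptrigraph V) : Prop :=
  partition (pv H) [set: V] /\
  {in pv H &, forall P Q, P != Q ->
     pb H P Q = rel_between (black G) P Q /\
     pr H P Q = ~~ rel_between (black G) P Q && ~~ rel_between (nonadj G) P Q}.

Section Quotient.
Variables (V : finType) (G : trigraph V).
Implicit Types (H : ptrigraph V) (P Q u v : {set V}).

Lemma lift_quotient : wf_trigraph G -> quotient_of G (Defs.lift G).
Proof.
case=> _ _ _ _ black_not_red; split.
  have [] := @indexed_partition _ _ V (fun x => [set x]).
  - by move=> x y _ _ neq_yx; rewrite disjoints1 inE eq_sym.
  - by move=> x _; apply/set0Pn; exists x; rewrite set11.
  move=> + _; suff -> : cover [set [set x] | x : V] = [set: V] by [].
  by apply/setP => x; rewrite inE; apply/bigcupP; exists [set x]; rewrite ?imset_f ?set11.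
move=> _ _ /imsetP[x _ ->] /imsetP[y _ ->] _ /=.
have lift_edge (f : rel V) : [exists x', exists y',
    [&& [set x] == [set x'], [set y] == [set y'] & f x' y']] = f x y.
  apply/existsP/idP => [[x' /existsP[y' /and3P[/eqP/set1_inj <- /eqP/set1_inj <- //]]] | fxy].
  by exists x; apply/existsP; exists y; rewrite !eqxx.
rewrite !lift_edge !rel_between1 /nonadj /adj; split => //.
by move: (black_not_red x y); case: (black G x y); case: (red G x y).
Qed.

Lemma nonadj_between_not_black P Q : P != set0 -> Q != set0 ->
  rel_between (nonadj G) P Q -> ~~ rel_between (black G) P Q.
Proof.
move=> /set0Pn[p hp] /set0Pn[q hq] /rel_betweenP/(_ p q hp hq).
rewrite /nonadj /adj negb_or => /andP[nbpq _].
by apply: contra nbpq => /rel_betweenP; apply.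
Qed.

Lemma quotient_nonedge H P Q : quotient_of G H -> P \in pv H -> Q \in pv H -> P != Q ->
  ~~ pb H P Q && ~~ pr H P Q = rel_between (nonadj G) P Q.
Proof.
move=> [partH edges] hP hQ neqPQ; have [-> ->] := edges _ _ hP hQ neqPQ.
have := @nonadj_between_not_black P Q (partition_neq0 partH hP) (partition_neq0 partH hQ).
by case: rel_between; case: rel_between => // /(_ isT).
Qed.

Lemma mem_contract H u v P :
  (P \in pv (contract H u v)) = (P == u :|: v) || [&& P != v, P != u & P \in pv H].
Proof. by rewrite /contract /= in_setU1 !in_setD1. Qed.

Lemma partition_neq_setU (T : finType) (D : {set T}) (Ps : {set {set T}}) (u v Q : {set T}) :
  partition Ps D -> u \in Ps -> Q \in Ps -> Q != u -> Q != u :|: v.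
Proof.
move=> partPs hu hQ neqQu; have /set0Pn[p hp] := partition_neq0 partPs hu.
apply: contraTneq (trivIsetP (partition_trivIset partPs) _ _ hQ hu neqQu) => ->.
by apply/pred0Pn; exists p; rewrite /= !inE hp.
Qed.

Section ContractEdges.
Variables (H : ptrigraph V) (u v Q : {set V}).
Hypotheses (quotH : quotient_of G H) (hu : u \in pv H) (hv : v \in pv H).
Hypotheses (hQ : Q \in pv H) (neqQu : Q != u) (neqQv : Q != v).

Let neqQw : Q != u :|: v.
Proof. exact: partition_neq_setU quotH.1 hu hQ neqQu. Qed.

Let neq_uQ : u != Q. Proof. by rewrite eq_sym. Qed.
Let neq_vQ : v != Q. Proof. by rewrite eq_sym. Qed.

Lemma contract_edges_from :
  pb (contract H u v) (u :|: v) Q = rel_between (black G) (u :|: v) Q /\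
  pr (contract H u v) (u :|: v) Q =
    ~~ rel_between (black G) (u :|: v) Q && ~~ rel_between (nonadj G) (u :|: v) Q.
Proof.
rewrite /contract /= eqxx neqQw /= !rel_betweenUl !(quotient_nonedge quotH) //.
by have [-> _] := quotH.2 _ _ hu hQ neq_uQ; have [-> _] := quotH.2 _ _ hv hQ neq_vQ.
Qed.

Lemma contract_edges_to :
  pb (contract H u v) Q (u :|: v) = rel_between (black G) Q (u :|: v) /\
  pr (contract H u v) Q (u :|: v) =
    ~~ rel_between (black G) Q (u :|: v) && ~~ rel_between (nonadj G) Q (u :|: v).
Proof.
rewrite /contract /= (negbTE neqQw) eqxx !rel_betweenUr !(quotient_nonedge quotH) //.
by have [-> _] := quotH.2 _ _ hQ hu neqQu; have [-> _] := quotH.2 _ _ hQ hv neqQv.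
Qed.

End ContractEdges.

Lemma contract_quotient H u v : quotient_of G H -> u \in pv H -> v \in pv H -> u != v ->
  quotient_of G (contract H u v).
Proof.
move=> quotH hu hv neq_uv; split; first exact: partition_merge quotH.1 hu hv neq_uv.
have old_part P : P \in pv (contract H u v) -> P != u :|: v -> [/\ P \in pv H, P != u & P != v].
  by rewrite mem_contract => /orP[-> // | /and3P[]].
move=> P Q hP hQ neqPQ.
case: (eqVneq P (u :|: v)) neqPQ => [-> | neqPw];
  case: (eqVneq Q (u :|: v)) => [-> | neqQw] // neqPQ.
- by have [] := old_part _ hQ neqQw; apply: contract_edges_from.
- by have [] := old_part _ hP neqPw; apply: contract_edges_to.
have [hP' _ _] := old_part _ hP neqPw; have [hQ' _ _] := old_part _ hQ neqQw.
by rewrite /contract /= (negbTE neqPw) (negbTE neqQw); apply: quotH.2.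
Qed.

End Quotient.

Lemma stage0 (V : finType) (G : trigraph V) cs : stage G cs 0 = Defs.lift G.
Proof. by rewrite /stage take0. Qed.

Lemma stageS (V : finType) (G : trigraph V) cs i : i < size cs ->
  stage G cs i.+1 = contract (stage G cs i) (contr cs i).1 (contr cs i).2.
Proof. by move=> lt_i; rewrite /stage (take_nth (set0, set0) lt_i) foldl_rcons. Qed.

Lemma stage_quotient (V : finType) (G : trigraph V) d cs i :
  wf_trigraph G -> partial_seq G d cs -> i <= size cs -> quotient_of G (stage G cs i).
Proof.
move=> wfG [valid _]; elim: i => [|i IH] le_i; first by rewrite stage0; apply: lift_quotient.
have [hu hv neq_uv] := valid i le_i.
by rewrite stageS //; apply: contract_quotient => //; apply: IH (ltnW le_i).
Qed.

Definition parts_separate (V : finType) (A B : {set V}) (H : ptrigraph V) : Prop :=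
  forall P x y, P \in pv H -> x \in P -> y \in P -> x \in A -> y \in B -> x = y.

Lemma lift_separate (V : finType) (G : trigraph V) A B : parts_separate A B (Defs.lift G).
Proof. by move=> _ x y /imsetP[z _ ->]; rewrite !inE => /eqP -> /eqP ->. Qed.

Lemma stage_separate (V : finType) (G : trigraph V) d cs (A B : {set V}) i :
  partial_seq G d cs -> i <= size cs ->
  (forall j, j < i -> ~ exists x y, [/\ x \in A, y \in B & involves (contr cs j) x y]) ->
  parts_separate A B (stage G cs i).
Proof.
move=> [valid _]; elim: i => [|i IH] le_i no_involve; first by rewrite stage0; apply: lift_separate.
have sepi : parts_separate A B (stage G cs i).
  by apply: IH (ltnW le_i) _ => j lt_ji; apply: no_involve; apply: ltnW.
have [hu hv _] := valid i le_i.
rewrite stageS // => P x y; rewrite mem_contract => /orP[/eqP -> | /and3P[_ _ hP]];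
  last exact: sepi.
move=> /setUP[xu | xv] /setUP[yu | yv] xA yB.
- exact: sepi hu xu yu xA yB.
- by case: (no_involve i (ltnSn i)); exists x, y; rewrite /involves xu yv.
- by case: (no_involve i (ltnSn i)); exists x, y; rewrite /involves xv yu orbT.
- exact: sepi hv xv yv xA yB.
Qed.

Lemma separate_pblock (V : finType) (A B : {set V}) (H : ptrigraph V) z1 z2 :
  partition (pv H) [set: V] -> parts_separate A B H -> z1 \in A -> z2 \in B ->
  pblock (pv H) z1 = pblock (pv H) z2 -> z1 = z2.
Proof.
move=> partH sepH z1A z2B eq_part.
have cov z : z \in cover (pv H) by rewrite (cover_partition partH) inE.
apply: (sepH (pblock (pv H) z1)) z1A z2B; first exact: pblock_mem.
  by rewrite mem_pblock.
by rewrite eq_part mem_pblock.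
Qed.

(* [z] sees [{x1, x2}] neither all black nor all non-adjacent, so once [x1] and [x2]
   are merged, the part of [z] becomes a red neighbour. *)
Definition mixed (V : finType) (G : trigraph V) (x1 x2 z : V) : bool :=
  ~~ (black G x1 z && black G x2 z) && (adj G x1 z || adj G x2 z).

Section RedDegree.
Variables (V : finType) (G : trigraph V) (H : ptrigraph V) (u v : {set V}).
Hypotheses (quotH : quotient_of G H) (hu : u \in pv H) (hv : v \in pv H).

Lemma contract_red_mixed Q x1 x2 z : Q \in pv H -> Q != u -> Q != v ->
  x1 \in u :|: v -> x2 \in u :|: v -> z \in Q -> mixed G x1 x2 z ->
  pr (contract H u v) (u :|: v) Q.
Proof.
move=> hQ neqQu neqQv hx1 hx2 hz /andP[not_black adjacent].
have [_ ->] := contract_edges_from quotH hu hv hQ neqQu neqQv.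
apply/andP; split.
  by move: not_black; apply: contra => /rel_betweenP black_wQ; rewrite !black_wQ.
move: adjacent; apply: contraL => /rel_betweenP nonadj_wQ.
by rewrite negb_or; apply/andP; split; [apply: nonadj_wQ hx1 hz | apply: nonadj_wQ hx2 hz].
Qed.

Lemma reddeg_contract_ge (Z : {set V}) x1 x2 :
  x1 \in u :|: v -> x2 \in u :|: v ->
  {in Z, forall z, mixed G x1 x2 z /\ pblock (pv H) z \notin [set u; v]} ->
  {in Z &, injective (pblock (pv H))} ->
  #|Z| <= reddeg (contract H u v) (u :|: v).
Proof.
move=> hx1 hx2 hZ inj_part; rewrite /reddeg -(card_in_imset inj_part).
apply/subset_leq_card/subsetP => _ /imsetP[z zZ ->].
have [mixed_z] := hZ z zZ; rewrite !inE negb_or => /andP[neq_u neq_v].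
have hQ : pblock (pv H) z \in pv H by rewrite pblock_mem // (cover_partition quotH.1) inE.
rewrite hQ neq_u neq_v orbT /=.
apply: contract_red_mixed hx1 hx2 _ mixed_z => //.
by rewrite mem_pblock (cover_partition quotH.1) inE.
Qed.

End RedDegree.

(* [inl i] stands for a_(i+1) and [inr i] for b_(i+1). *)
Definition fence_vertex (V : finType) (a b : 'I_6 -> V) (t : 'I_6 + 'I_6) : V :=
  match t with inl i => a i | inr i => b i end.

Definition fence_a (t : 'I_6 + 'I_6) : bool := if t is inl _ then true else false.

Definition fence_black (r t : 'I_6 + 'I_6) : bool :=
  match r, t with
  | inl i, inl j | inr i, inr j => (i.+1 %% 6 == j) || (j.+1 %% 6 == i)
  | inl i, inr j | inr j, inl i => (i == 5 :> nat) && (j == 0 :> nat)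
  end.

Definition fence_red (r t : 'I_6 + 'I_6) : bool :=
  match r, t with
  | inl i, inr j | inr j, inl i => (i == j :> nat) || (j == i.+1 :> nat)
  | _, _ => false
  end.

(* The fence together with one attached vertex [None], which is joined by black edges
   to A and not adjacent to B. *)
Definition model_black (o : option ('I_6 + 'I_6)) (t : 'I_6 + 'I_6) : bool :=
  if o is Some r then fence_black r t else fence_a t.

Definition model_adj (o : option ('I_6 + 'I_6)) (t : 'I_6 + 'I_6) : bool :=
  if o is Some r then fence_black r t || fence_red r t else fence_a t.

Definition model_mixed (o1 o2 : option ('I_6 + 'I_6)) (t : 'I_6 + 'I_6) : bool :=
  ~~ (model_black o1 t && model_black o2 t) && (model_adj o1 t || model_adj o2 t).

(* [r] and [o] lie on opposite sides of the fence; every vertex of S is then mixed for them. *)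
Definition crosses (r : 'I_6 + 'I_6) (o : option ('I_6 + 'I_6)) : bool :=
  if o is Some q then fence_a r != fence_a q else false.

(* An explicit enumeration, which unlike [enum] reduces under [vm_compute]. *)
Definition fence_indices : seq ('I_6 + 'I_6) :=
  let I6 := [:: @Ordinal 6 0 erefl; @Ordinal 6 1 erefl; @Ordinal 6 2 erefl;
                @Ordinal 6 3 erefl; @Ordinal 6 4 erefl; @Ordinal 6 5 erefl] in
  [seq inl i | i <- I6] ++ [seq inr i | i <- I6].

Lemma mem_fence_indices t : t \in fence_indices.
Proof. by case: t => [[[|[|[|[|[|[|k]]]]]] lt_k6] | [[|[|[|[|[|[|k]]]]]] lt_k6]]. Qed.

Lemma card_set_fence_indices (p : pred ('I_6 + 'I_6)) :
  #|[set t | p t]| = count p fence_indices.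
Proof.
have uniq_fi : uniq fence_indices by vm_compute.
rewrite -size_filter -(card_uniqP (filter_uniq p uniq_fi)).
by apply: eq_card => t; rewrite inE mem_filter mem_fence_indices andbT.
Qed.

Lemma model_mixed_count : all (fun r => all (fun o => (Some r == o) ||
    (5 <= count (fun t => [&& Some t != o, t != r & model_mixed (Some r) o t]) fence_indices
          + 2 * crosses r o))
  (None :: map Some fence_indices)) fence_indices.
Proof. by vm_compute. Qed.

Lemma model_mixed_card r o : Some r != o ->
  5 <= #|[set t | [&& Some t != o, t != r & model_mixed (Some r) o t]]| + 2 * crosses r o.
Proof.
move=> neq_ro; rewrite card_set_fence_indices.
have /allP/(_ r (mem_fence_indices r))/allP/(_ o) := model_mixed_count.
rewrite (negbTE neq_ro); apply; case: o {neq_ro} => [q|]; last by rewrite inE eqxx.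
by rewrite in_cons (mem_map (@Some_inj _)) mem_fence_indices orbT.
Qed.

Section FenceInG.
Variables (V : finType) (G : trigraph V) (a b : 'I_6 -> V) (S : {set V}).
Hypotheses (wfG : wf_trigraph G) (fenceG : is_fence G a b) (attS : attached G a b S).

Lemma VF_imset : VF a b = [set fence_vertex a b t | t : 'I_6 + 'I_6].
Proof.
apply/setP => x; apply/setUP/imsetP => [[] /imsetP[i _ ->] | [[i|i] _ ->]].
- by exists (inl i).
- by exists (inr i).
- by left; apply: imset_f.
- by right; apply: imset_f.
Qed.

Lemma VF_fence_vertex x : x \in VF a b -> exists t, x = fence_vertex a b t.
Proof. by rewrite VF_imset => /imsetP[t _ ->]; exists t. Qed.

Lemma fence_vertex_VF t : fence_vertex a b t \in VF a b.
Proof. by rewrite VF_imset imset_f. Qed.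

Lemma fence_vertex_inj : injective (fence_vertex a b).
Proof.
have [[inj_a inj_b neq_ab] _] := fenceG.
move=> [i|i] [j|j] /= eq_ij.
- by rewrite (inj_a _ _ eq_ij).
- by move: (neq_ab i j); rewrite eq_ij eqxx.
- by move: (neq_ab j i); rewrite eq_ij eqxx.
- by rewrite (inj_b _ _ eq_ij).
Qed.

Lemma black_fence_vertex r t :
  black G (fence_vertex a b r) (fence_vertex a b t) = fence_black r t.
Proof.
have [sym_black _ _ _ _] := wfG; have [_ [[black_aa black_bb black_ab] _]] := fenceG.
by case: r t => [i|i] [j|j] /=; rewrite ?black_aa ?black_bb ?black_ab // sym_black black_ab.
Qed.

Lemma red_fence_vertex r t :
  red G (fence_vertex a b r) (fence_vertex a b t) = fence_red r t.
Proof.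
have [_ sym_red _ _ _] := wfG; have [_ [_ [red_aa red_bb red_ab]]] := fenceG.
by case: r t => [i|i] [j|j] /=; rewrite ?red_aa ?red_bb ?red_ab // sym_red red_ab.
Qed.

Definition model_vertex (s : V) (o : option ('I_6 + 'I_6)) : V :=
  if o is Some r then fence_vertex a b r else s.

Lemma mixed_model_vertex s o1 o2 t : s \in S ->
  mixed G (model_vertex s o1) (model_vertex s o2) (fence_vertex a b t) = model_mixed o1 o2 t.
Proof.
move=> sS; have [sym_black sym_red _ _ _] := wfG; have [_ _ black_aS nonadj_bS] := attS.
have model_edges o : black G (model_vertex s o) (fence_vertex a b t) = model_black o t /\
                     adj G (model_vertex s o) (fence_vertex a b t) = model_adj o t.
  case: o => [r|] /=; first by rewrite /adj black_fence_vertex red_fence_vertex.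
  rewrite /adj sym_black sym_red; case: t => [i|i] /=; first by rewrite black_aS.
  by move: (nonadj_bS i s sS); rewrite /adj negb_or => /andP[/negbTE -> /negbTE ->].
by rewrite /mixed /model_mixed; have [-> ->] := model_edges o1; have [-> ->] := model_edges o2.
Qed.

Lemma mixed_attached s r q : s \in S ->
  mixed G (fence_vertex a b r) (fence_vertex a b q) s = (fence_a r != fence_a q).
Proof.
move=> sS; have [_ _ black_aS nonadj_bS] := attS.
have nonadj_b i : black G (b i) s = false /\ red G (b i) s = false.
  by move: (nonadj_bS i s sS); rewrite /adj negb_or => /andP[/negbTE -> /negbTE ->].
rewrite /mixed /adj; case: r q => [i|i] [j|j] /=;
  by rewrite ?black_aS ?(nonadj_b i).1 ?(nonadj_b i).2 ?(nonadj_b j).1 ?(nonadj_b j).2.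
Qed.

Lemma attached_notin_VF s : s \in S -> s \notin VF a b.
Proof. by have [_ disj_SVF _ _] := attS; move=> sS; rewrite (disjointFr disj_SVF sS). Qed.

Lemma VF_neq_attached x s : x \in VF a b -> s \in S -> x != s.
Proof. by move=> xF /attached_notin_VF; apply: contraNneq => <-. Qed.

Lemma fence_vertex_neq_model s t o : s \in S -> Some t != o ->
  fence_vertex a b t != model_vertex s o.
Proof.
move=> sS; case: o => [q|] /=; first by rewrite (inj_eq fence_vertex_inj) (inj_eq (@Some_inj _)).
by move=> _; apply: VF_neq_attached (fence_vertex_VF t) sS.
Qed.

Lemma model_mixed_witnesses s r o s1 s2 :
  s \in S -> s1 \in S -> s2 \in S -> s1 != s2 -> Some r != o ->
  exists2 Z : {set V}, 5 <= #|Z| &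
    {in Z, forall z, [/\ mixed G (fence_vertex a b r) (model_vertex s o) z,
                         z != fence_vertex a b r, z != model_vertex s o &
                         (z \in VF a b) ||
                         (model_vertex s o \in VF a b) && (z \in [set s1; s2])]}.
Proof.
move=> sS s1S s2S neq_s12 neq_ro.
set T := [set t | [&& Some t != o, t != r & model_mixed (Some r) o t]].
set Ss := if crosses r o then [set s1; s2] else set0.
exists (fence_vertex a b @: T :|: Ss).
  have disj : [disjoint fence_vertex a b @: T & Ss].
    rewrite /Ss; case: crosses; last by rewrite -setI_eq0 setI0.
    rewrite disjoint_subset; apply/subsetP => _ /imsetP[t _ ->].
    by rewrite !inE negb_or !VF_neq_attached ?fence_vertex_VF.
  have /eqP -> : #|fence_vertex a b @: T :|: Ss| == #|fence_vertex a b @: T| + #|Ss|.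
    by rewrite (leq_card_setU _ _).2.
  rewrite (card_imset _ fence_vertex_inj) /Ss.
  by case: crosses (model_mixed_card neq_ro); rewrite ?cards2 ?neq_s12 ?cards0.
move=> z /setUP[/imsetP[t] | ].
  rewrite inE => /and3P[neq_to neq_tr mixed_t] ->.
  rewrite -[fence_vertex a b r]/(model_vertex s (Some r)) mixed_model_vertex //=.
  by rewrite fence_vertex_VF fence_vertex_neq_model // (inj_eq fence_vertex_inj).
rewrite /Ss; case: ifP => [cross_ro z_s12 | _]; last by rewrite inE.
clear T Ss.
have zS : z \in S by case/set2P: z_s12 => ->.
case: o neq_ro cross_ro => [q|] //= _ cross_rq.
rewrite mixed_attached // cross_rq fence_vertex_VF z_s12 orbT ![z == _]eq_sym.
by rewrite !VF_neq_attached ?fence_vertex_VF.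
Qed.

Lemma fence_mixed_witnesses x y s1 s2 :
  x \in VF a b -> y \in VF a b :|: S -> x != y -> s1 \in S -> s2 \in S -> s1 != s2 ->
  exists2 Z : {set V}, 5 <= #|Z| &
    {in Z, forall z, [/\ mixed G x y z, z != x, z != y &
                         (z \in VF a b) || (y \in VF a b) && (z \in [set s1; s2])]}.
Proof.
move=> /VF_fence_vertex[r ->] /setUP[/VF_fence_vertex[q ->] | yS] neq_xy s1S s2S neq_s12.
  apply: (@model_mixed_witnesses s1 r (Some q)) => //.
  by apply: contraNneq neq_xy => -[->].
exact: (@model_mixed_witnesses y r None).
Qed.

End FenceInG.

Section FenceContraction.
Variables (V : finType) (G : trigraph V) (a b : 'I_6 -> V) (S : {set V}).
Hypotheses (wfG : wf_trigraph G) (fenceG : is_fence G a b) (attS : attached G a b S).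
Variables (H : ptrigraph V) (u v : {set V}).
Hypotheses (quotH : quotient_of G H) (sepH : parts_separate (VF a b) (VF a b :|: S) H).
Hypotheses (hu : u \in pv H) (hv : v \in pv H) (neq_uv : u != v).

Lemma split_attached : ~~ [exists P in pv H, S \subset P] ->
  exists s1 s2, [/\ s1 \in S, s2 \in S & pblock (pv H) s1 != pblock (pv H) s2].
Proof.
move=> not_in_part; have [S_ne0 _ _ _] := attS; have /set0Pn[s1 s1S] := S_ne0.
have part_s1 : pblock (pv H) s1 \in pv H by rewrite pblock_mem // (cover_partition quotH.1) inE.
have /subsetPn[s2 s2S s2_out] : ~~ (S \subset pblock (pv H) s1).
  by apply: contra not_in_part => sub; apply/exists_inP; exists (pblock (pv H) s1).
exists s1, s2; split => //; apply: contraNneq s2_out => ->.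
by rewrite mem_pblock (cover_partition quotH.1) inE.
Qed.

Lemma contract_fence_reddeg x y :
  x \in VF a b -> y \in VF a b :|: S -> involves (u, v) x y ->
  ~~ [exists P in pv H, S \subset P] -> 4 < reddeg (contract H u v) (u :|: v).
Proof.
move=> xF yFS inv_xy /split_attached[s1 [s2 [s1S s2S neq_part12]]].
have triv := partition_trivIset quotH.1.
have neq_xy : x != y.
  apply: contraNneq neq_uv => eq_xy; rewrite eq_xy in inv_xy.
  case/orP: inv_xy => /andP[/= yu yv].
    by rewrite -(def_pblock triv hu yu) (def_pblock triv hv yv).
  by rewrite -(def_pblock triv hu yv) (def_pblock triv hv yu).
have parts_uv : [set u; v] = [set pblock (pv H) x; pblock (pv H) y].
  by case/orP: inv_xy => /andP[/= xu yv]; rewrite ?(def_pblock triv hu xu)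
    ?(def_pblock triv hv yv) ?(def_pblock triv hv xu) ?(def_pblock triv hu yv) // setUC.
have [xu_v yu_v] : x \in u :|: v /\ y \in u :|: v.
  by case/orP: inv_xy => /andP[/= ? ?]; rewrite !inE; split; apply/orP; auto.
have neq_s12 : s1 != s2 by apply: contraNneq neq_part12 => ->.
have [Z card_Z hZ] := fence_mixed_witnesses wfG fenceG attS xF yFS neq_xy s1S s2S neq_s12.
have ZFS z : z \in Z -> z \in VF a b :|: S.
  by case/hZ => _ _ _ /orP[zF | /andP[_ /set2P[] ->]]; rewrite inE ?zF ?s1S ?s2S ?orbT.
apply: (leq_trans card_Z); apply: (reddeg_contract_ge quotH hu hv xu_v yu_v).
- move=> z zZ; have [mixed_z neq_zx neq_zy zF_or] := hZ z zZ; split => //.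
  rewrite parts_uv !inE; apply/norP; split.
    apply: contra neq_zx => /eqP eq_part.
    by rewrite (separate_pblock quotH.1 sepH xF (ZFS z zZ) (esym eq_part)).
  apply: contra neq_zy => /eqP eq_part; case/orP: zF_or => [zF | /andP[yF _]].
    by apply/eqP; apply: separate_pblock quotH.1 sepH zF yFS eq_part.
  by apply/eqP/esym; apply: separate_pblock quotH.1 sepH yF (ZFS z zZ) (esym eq_part).
- move=> z1 z2 z1Z z2Z eq_part.
  have [_ _ _ /orP[z1F | /andP[_ z1s]]] := hZ z1 z1Z.
    exact: separate_pblock quotH.1 sepH z1F (ZFS z2 z2Z) eq_part.
  have [_ _ _ /orP[z2F | /andP[_ z2s]]] := hZ z2 z2Z.
    exact/esym/(separate_pblock quotH.1 sepH z2F (ZFS z1 z1Z) (esym eq_part)).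
  case/set2P: z1s eq_part => ->; case/set2P: z2s => -> // eq_part;
    by move: neq_part12; rewrite eq_part eqxx.
Qed.

End FenceContraction.

Theorem lemma4p8 (V : finType) (G : trigraph V) (a b : 'I_6 -> V) (S : {set V}) :
  wf_trigraph G -> is_fence G a b -> attached G a b S -> attachment_rule G a b S ->
  forall cs : seq ({set V} * {set V}), partial_seq G 4 cs ->
  forall i, i < size cs ->
  (exists x y, [/\ x \in VF a b, y \in VF a b :|: S & involves (contr cs i) x y]) ->
  (forall j, j < i ->
     ~ exists x y, [/\ x \in VF a b, y \in VF a b :|: S & involves (contr cs j) x y]) ->
  exists P, P \in pv (stage G cs i) /\ S \subset P.
Proof.
move=> wfG fenceG attS _ cs seqG i lt_i [x [y [xF yFS inv_xy]]] no_earlier.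
have quotH := stage_quotient wfG seqG (ltnW lt_i).
have sepH := stage_separate seqG (ltnW lt_i) no_earlier.
have [hu hv neq_uv] := seqG.1 i lt_i.
have [/exists_inP[P hP sSP] | no_part] := boolP [exists P in pv (stage G cs i), S \subset P].
  by exists P.
have := seqG.2 i.+1 lt_i; rewrite stageS //.
case: (contr cs i) hu hv neq_uv inv_xy => u v /= hu hv neq_uv inv_xy /(_ _ (setU11 _ _)).
by rewrite leqNgt (contract_fence_reddeg wfG fenceG attS quotH sepH hu hv neq_uv xF yFS inv_xy).
Qed.
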